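(* Let $G$ be a closed and continuous metric cyclic graph whose vertex set $V$ is homeomorphic to $S^1$, and let $\gamma=\inf_{u\in V}\gamma_V(u)$. Then the map $H:V\times[0,\gamma]\to V$, $H(u,r)=g_r(u)$, is continuous.
   Context: Identify $S^1$ with $[0,1)$; $d_{S^1}(x,y)\in[0,1)$ is the normalized counterclockwise distance from $x$ to $y$, and $[x,y]_V$ denotes the set of points of $V$ on the closed counterclockwise arc from $x$ to $y$. A directed graph $G=(V,E)$ (no loops, no opposite edges) with $V\subseteq S^1$ is cyclic if whenever $u_0\to u_1$, every $w\in V$ strictly counterclockwise-between $u_0$ and $u_1$ has $u_0\to w$ and $w\to u_1$. Define $\gamma_m(u_0)=\sup\{\sum_{i=0}^{m-1}d_{S^1}(u_i,u_{i+1}):u_0\to\cdots\to u_m\text{ in }G\}$ and $f_1(u)=u+\gamma_1(u)\bmod1$. $G$ is closed if $V$ is closed in $S^1$ (then $f_1(u)\in V$), and continuous if every $\gamma_m$ is continuous. $G$ is metric if $V$ carries a metric $d_V$ inducing the subspace topology from $S^1$ such that $d_V(u_0,u_1)<d_V(u_0,u_2)$ for every directed path $u_0\to u_1\to u_2$. Set $\gamma_V(u)=d_V(u,f_1(u))$. For $r\in[0,\gamma_V(u)]$, $g_r(u)$ is the unique point $w\in[u,f_1(u)]_V$ with $d_V(u,w)=r$. *)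

(* R : realType. S^1 is identified with [0,1). *)
From mathcomp Require Import all_boot all_order all_algebra.
From mathcomp Require Import all_classical all_reals.
Set Implicit Arguments. Unset Strict Implicit. Unset Printing Implicit Defensive.
Import Order.TTheory GRing.Theory Num.Theory.
Local Open Scope ring_scope.
Local Open Scope classical_set_scope.

Section CyclicGraphs.
Variable R : realType.

Definition frac01 (x : R) : R := x - (Num.floor x)%:~R.

Definition S1 : set R := [set x | 0 <= x < 1].

(* normalized counterclockwise distance from x to y *)
Definition dccw (x y : R) : R := frac01 (y - x).

(* the (symmetric) arc-length metric of S^1, giving its topology *)
Definition dcirc (x y : R) : R := Num.min (dccw x y) (dccw y x).

Record cyclic_graph (V : set R) (E : R -> R -> Prop) : Prop := {
  cg_sub : V `<=` S1;
  cg_edge : forall u v, E u v -> V u /\ V v;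
  cg_noloop : forall u, ~ E u u;
  cg_noopp : forall u v, E u v -> ~ E v u;
  cg_cyclic : forall u0 u1, E u0 u1 ->
     forall w, V w -> 0 < dccw u0 w < dccw u0 u1 -> E u0 w /\ E w u1 }.

Definition path_lengths (E : R -> R -> Prop) (m : nat) (u0 : R) : set R :=
  [set s | exists u : nat -> R, u 0%N = u0 /\
      (forall i, (i < m)%N -> E (u i) (u i.+1)) /\
      s = \sum_(i < m) dccw (u i) (u i.+1)].

Definition gamma_m (E : R -> R -> Prop) (m : nat) (u0 : R) : R :=
  sup (path_lengths E m u0).

Definition f1 (E : R -> R -> Prop) (u : R) : R := frac01 (u + gamma_m E 1 u).

Definition closed_V (V : set R) : Prop :=
  forall x, S1 x -> (forall e, 0 < e -> exists v, V v /\ dcirc x v < e) -> V x.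

Definition cont_on_V (V : set R) (f : R -> R) : Prop :=
  forall x, V x -> forall e, 0 < e -> exists2 d, 0 < d &
    forall y, V y -> dcirc x y < d -> `|f x - f y| < e.

Definition continuous_graph (V : set R) (E : R -> R -> Prop) : Prop :=
  forall m, cont_on_V V (gamma_m E m).

Record metric_for (V : set R) (E : R -> R -> Prop) (dV : R -> R -> R) : Prop := {
  mV_ge0 : forall x y, V x -> V y -> 0 <= dV x y;
  mV_eq0 : forall x y, V x -> V y -> (dV x y = 0 <-> x = y);
  mV_sym : forall x y, V x -> V y -> dV x y = dV y x;
  mV_tri : forall x y z, V x -> V y -> V z -> dV x z <= dV x y + dV y z;
  mV_top1 : forall x, V x -> forall e, 0 < e -> exists2 d, 0 < d &
              forall y, V y -> dcirc x y < d -> dV x y < e;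
  mV_top2 : forall x, V x -> forall e, 0 < e -> exists2 d, 0 < d &
              forall y, V y -> dV x y < d -> dcirc x y < e;
  mV_path : forall u0 u1 u2, E u0 u1 -> E u1 u2 -> dV u0 u1 < dV u0 u2 }.

Definition homeomorphic_S1 (V : set R) : Prop :=
  exists phi psi : R -> R,
    (forall x, V x -> S1 (phi x)) /\ (forall y, S1 y -> V (psi y)) /\
    (forall x, V x -> psi (phi x) = x) /\ (forall y, S1 y -> phi (psi y) = y) /\
    (forall x, V x -> forall e, 0 < e -> exists2 d, 0 < d &
        forall y, V y -> dcirc x y < d -> dcirc (phi x) (phi y) < e) /\
    (forall x, S1 x -> forall e, 0 < e -> exists2 d, 0 < d &
        forall y, S1 y -> dcirc x y < d -> dcirc (psi x) (psi y) < e).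

Definition gamma_V (E : R -> R -> Prop) (dV : R -> R -> R) (u : R) : R :=
  dV u (f1 E u).

Definition arcV (V : set R) (x y : R) : set R :=
  [set w | V w /\ dccw x w <= dccw x y].

Definition g_r (V : set R) (E : R -> R -> Prop) (dV : R -> R -> R) (r u : R) : R :=
  xget 0 [set w | arcV V u (f1 E u) w /\ dV u w = r].

Definition gamma_inf (V : set R) (E : R -> R -> Prop) (dV : R -> R -> R) : R :=
  inf [set gamma_V E dV u | u in V].

End CyclicGraphs.

(* A subset of the circle homeomorphic to the circle is the whole circle: otherwise,
   measuring counterclockwise from a missing point turns the homeomorphism into a
   continuous real function on [0, 1] that is 1-periodic and injective on [0, 1),
   which the intermediate value theorem forbids.

   If gamma = 0 then r = 0 and g_0 is the identity.  Otherwise every gamma_1(u) lies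
   in (0, 1), and by the cyclic condition and the metric condition on paths the map
   s |-> d_V(u, u + s) is continuous and strictly increasing on [0, gamma_1(u)];
   g_r(u) is u + t for the solution t of d_V(u, u + t) = r.  Moving u to u' shifts
   the parameter by at most d(u, u'), moves the end of the interval by continuity of
   gamma_1, and changes the function by at most d_V(u, u') (triangle inequality).
   The solution of an equation f(t) = r with f strictly increasing is stable under
   such perturbations. *)
From mathcomp Require Import all_boot all_order all_algebra.
From mathcomp Require Import all_classical all_reals all_analysis.
From mathcomp.algebra_tactics Require Import ring lra.
Set Implicit Arguments. Unset Strict Implicit. Unset Printing Implicit Defensive.
Import Order.TTheory GRing.Theory Num.Theory.
Import numFieldNormedType.Exports.
Local Open Scope ring_scope.
Local Open Scope classical_set_scope.

Section CircleArithmetic.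
Variable R : realType.
Implicit Types a b s t x y : R.

Lemma frac01_eq x (k : int) : 0 <= x - k%:~R < 1 -> frac01 x = x - k%:~R.
Proof.
move=> /andP[k_le k_gt]; rewrite /frac01 (@floor_def _ x k) //.
by rewrite intrD1; apply/andP; split; lra.
Qed.

Lemma frac01_ge0 x : 0 <= frac01 x.
Proof. by rewrite /frac01 subr_ge0 floor_le. Qed.

Lemma frac01_lt1 x : frac01 x < 1.
Proof. have := floorD1_gt x; rewrite intrD1 /frac01; lra. Qed.

Lemma S1_frac01 x : S1 (frac01 x).
Proof. by rewrite /S1 /= frac01_ge0 frac01_lt1. Qed.

Lemma frac01_id x : S1 x -> frac01 x = x.
Proof. by move=> Sx; rewrite (@frac01_eq x 0) ?subr0. Qed.

Lemma frac01_addz x (k : int) : frac01 (x + k%:~R) = frac01 x.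
Proof.
rewrite (@frac01_eq _ (Num.floor x + k)) /frac01 intrD; first by ring.
have := frac01_ge0 x; have := frac01_lt1 x; rewrite /frac01 => ? ?.
by apply/andP; split; lra.
Qed.

Lemma frac01D a b : frac01 (frac01 a + b) = frac01 (a + b).
Proof.
have -> : frac01 a + b = (a + b) + (- Num.floor a)%:~R by rewrite /frac01 intrN; ring.
exact: frac01_addz.
Qed.

Lemma frac01B a b : frac01 (b - frac01 a) = frac01 (b - a).
Proof.
have -> : b - frac01 a = (b - a) + (Num.floor a)%:~R by rewrite /frac01; ring.
exact: frac01_addz.
Qed.

Lemma frac01_le x : 0 <= x -> frac01 x <= x.
Proof.
move=> x_ge0; rewrite /frac01 lerBlDr lerDl.
have : (0 <= Num.floor x)%R by rewrite floor_ge_int.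
by rewrite -(ler_int R).
Qed.

Lemma dcirc_sym x y : dcirc x y = dcirc y x.
Proof. by rewrite /dcirc minC. Qed.

Lemma dcirc_frac01 a b : dcirc (frac01 a) (frac01 b) = dcirc a b.
Proof. by rewrite /dcirc /dccw !frac01B !frac01D. Qed.

Lemma dcirc_subr a b c : dcirc (a - c) (b - c) = dcirc a b.
Proof. by rewrite /dcirc /dccw !opprB !addrA !subrK. Qed.

Lemma dcirc_le_norm x y : dcirc x y <= `|x - y|.
Proof.
rewrite /dcirc /dccw; case: (leP x y) => [xy|yx].
  by rewrite distrC ger0_norm ?subr_ge0 // ge_min frac01_le ?subr_ge0.
rewrite ger0_norm ?subr_ge0 ?(ltW yx) // ge_min (@frac01_le (x - y)) ?orbT //.
by rewrite subr_ge0 ltW.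
Qed.

Lemma dcirc_offset a b : exists2 o, `|o| = dcirc a b & frac01 b = frac01 (a + o).
Proof.
rewrite /dcirc /dccw; case: leP => _.
  exists (frac01 (b - a)); first by rewrite ger0_norm ?frac01_ge0.
  by rewrite addrC frac01D subrK.
exists (- frac01 (a - b)); first by rewrite normrN ger0_norm ?frac01_ge0.
by rewrite frac01B opprB addrC subrK.
Qed.

Lemma frac01_dist a b : dcirc a b < Num.min (frac01 a) (1 - frac01 a) ->
  `|frac01 a - frac01 b| = dcirc a b.
Proof.
case: (dcirc_offset a b) => o <- ->.
rewrite lt_min !ltr_norml => /andP[/andP[? ?] /andP[? ?]].
rewrite -frac01D (frac01_id (x := frac01 a + o)); last first.
  by rewrite /S1 /=; apply/andP; split; lra.
by rewrite opprD addNKr normrN.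
Qed.

Definition cshift x s : R := frac01 (x + s).

Lemma S1_cshift x s : S1 (cshift x s).
Proof. exact: S1_frac01. Qed.

Lemma cshift0 x : S1 x -> cshift x 0 = x.
Proof. by move=> Sx; rewrite /cshift addr0 frac01_id. Qed.

Lemma cshiftD x a b : cshift (cshift x a) b = cshift x (a + b).
Proof. by rewrite /cshift frac01D addrA. Qed.

Lemma dccw_cshift x s : S1 s -> dccw x (cshift x s) = s.
Proof. by move=> Ss; rewrite /dccw /cshift frac01D addrAC subrr add0r frac01_id. Qed.

Lemma cshift_dccw x y : S1 y -> cshift x (dccw x y) = y.
Proof. by move=> Sy; rewrite /cshift /dccw addrC frac01D subrK frac01_id. Qed.

Lemma dcirc_cshift x a b : dcirc (cshift x a) (cshift x b) <= `|a - b|.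
Proof.
rewrite /cshift dcirc_frac01; apply: le_trans (dcirc_le_norm _ _) _.
by rewrite opprD addrACA subrr add0r.
Qed.

End CircleArithmetic.

Section RealFunctions.
Variable R : realType.
Implicit Types (f g : R -> R) (a b c t v x y : R).

Lemma continuous_of_eps_delta f :
  (forall x e, 0 < e -> exists2 d, 0 < d & forall y, `|x - y| < d -> `|f x - f y| < e) ->
  continuous f.
Proof.
move=> f_eps x; apply/cvgrPdist_lt => e e0; have [d d0 Hd] := f_eps x e e0.
by apply/nbhs_ballP; exists d => // y /= xy; apply: Hd.
Qed.

Lemma continuous_le_closure f x v : {for x, continuous f} ->
  (forall d, 0 < d -> exists2 y, `|x - y| < d & f y <= v) -> f x <= v.
Proof.
move=> fx near_le; rewrite leNgt; apply/negP => vfx.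
have := (cvgrPdist_lt _ _).1 fx (f x - v); rewrite subr_gt0 => /(_ _ vfx).
case/nbhs_ballP => d d0 Hd.
have [y xy fyv] := near_le d d0.
have := Hd y xy; rewrite ltr_norml; lra.
Qed.

Lemma ivt_continuous f a b v : a <= b -> continuous f ->
  Num.min (f a) (f b) <= v <= Num.max (f a) (f b) -> exists2 c, a <= c <= b & f c = v.
Proof.
move=> ab f_cont fv.
have [c cab fc] := IVT ab (continuous_subspaceT (A := `[a, b]) f_cont) fv.
by exists c; rewrite // -in_itv.
Qed.

Lemma continuous_homo_lt_closed f a b : continuous f ->
  (forall x y, a < x -> x < y -> y < b -> f x < f y) ->
  forall x y, a <= x -> x < y -> y <= b -> f x < f y.
Proof.
move=> f_cont f_lt x y ax xy yb.
pose m1 := (2 * x + y) / 3; pose m2 := (x + 2 * y) / 3.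
have fx_le : f x <= f m1.
  apply: continuous_le_closure (f_cont x) _ => d d0.
  have k0 : 0 < Num.min d (m1 - x) by rewrite lt_min d0 /m1; lra.
  have [kd km] : Num.min d (m1 - x) <= d /\ Num.min d (m1 - x) <= m1 - x.
    by split; rewrite ge_min lexx ?orbT.
  exists (x + Num.min d (m1 - x) / 2).
    by rewrite opprD addNKr normrN gtr0_norm; lra.
  by apply/ltW/f_lt; rewrite /m1 in km *; lra.
have fy_ge : - f y <= - f m2.
  apply: (@continuous_le_closure (fun z => - f z)) (cvgN (f_cont y)) _ => d d0.
  have k0 : 0 < Num.min d (y - m2) by rewrite lt_min d0 /m2; lra.
  have [kd km] : Num.min d (y - m2) <= d /\ Num.min d (y - m2) <= y - m2.
    by split; rewrite ge_min lexx ?orbT.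
  exists (y - Num.min d (y - m2) / 2).
    by rewrite opprB addrC subrK gtr0_norm; lra.
  by rewrite lerN2; apply/ltW/f_lt; rewrite /m2 in km *; lra.
have : f m1 < f m2 by apply: f_lt; rewrite /m1 /m2; lra.
lra.
Qed.

Lemma continuous_periodic_not_injective f : continuous f -> f 0 = f 1 ->
  exists c1 c2, [/\ 0 <= c1, c1 < c2, c2 < 1 & f c1 = f c2].
Proof.
move=> f_cont f01; pose h := 1 / 2 : R.
have [f0h|f0h] := eqVneq (f 0) (f h); first by exists 0, h; split => //; rewrite /h; lra.
have mid_between (p q : R) : Num.min p q <= (p + q) / 2 <= Num.max p q.
  rewrite ge_min le_max; case: (leP p q) => ?.
    by apply/andP; split; apply/orP; [left|right]; lra.
  by apply/andP; split; apply/orP; [right|left]; lra.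
have [c1 /andP[c1_ge0 c1_le] fc1] :=
  ivt_continuous (a := 0) (b := h) ltac:(rewrite /h; lra) f_cont (mid_between _ _).
have [c2 /andP[c2_ge c2_le] fc2] :=
  ivt_continuous (a := h) (b := 1) ltac:(rewrite /h; lra) f_cont (mid_between _ _).
rewrite -f01 addrC in fc2.
have c1_lt : c1 < h.
  rewrite lt_neqAle c1_le andbT; apply: contra_neq f0h => c1h.
  by move: fc1; rewrite c1h; lra.
have c2_gt : h < c2.
  rewrite lt_neqAle c2_ge andbT; apply: contra_neq f0h => c2h.
  by move: fc2; rewrite -c2h; lra.
have c2_lt : c2 < 1.
  rewrite lt_neqAle c2_le andbT; apply: contra_neq f0h => c21.
  by move: fc2; rewrite c21 -f01; lra.
by exists c1, c2; split => //; [lra | rewrite fc1 fc2].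
Qed.

Lemma increasing_inverse_lower f L t0 e :
  (forall x y, 0 <= x -> x < y -> y <= L -> f x < f y) -> 0 <= t0 <= L -> 0 < e ->
  exists2 eta, 0 < eta & forall g a b t, `|a| < eta -> `|b - L| < eta ->
    (forall x y, a <= x -> x <= y -> y <= b -> g x <= g y) ->
    (forall s, `|g s - f s| < eta) -> a <= t <= b -> `|g t - f t0| < eta -> t0 - e < t.
Proof.
move=> f_lt /andP[t0_ge0 t0_le] e0.
have [t0_small|t0_big] := ltrP t0 (e / 2).
  exists (e / 2) => [|g a b t]; first lra.
  by rewrite ltr_norml => /andP[a_gt _] _ _ _ /andP[a_le _] _; lra.
pose s := t0 - e / 4.
have fs_lt : f s < f t0 by apply: f_lt; rewrite /s; lra.
exists (Num.min (e / 4) ((f t0 - f s) / 2)) => [|g a b t].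
  by rewrite lt_min; apply/andP; split; lra.
move=> a_lt b_lt g_le gf /andP[a_le t_le_b] gt_lt.
move: a_lt b_lt gt_lt (gf s); rewrite !lt_min !ltr_norml.
move=> /andP[/andP[a_gt _] _] /andP[/andP[b_gt _] _].
move=> /andP[_ /andP[gt_gt _]] /andP[_ /andP[_ gs_lt]].
rewrite ltNge; apply/negP => t_le.
have : g t <= g s by apply: g_le => //; rewrite /s in t_le *; lra.
rewrite /s in t_le gs_lt *; lra.
Qed.

(* The upper bound is the lower bound for the reflected function x |-> - f (L - x). *)
Lemma increasing_inverse_stable f L t0 e :
  (forall x y, 0 <= x -> x < y -> y <= L -> f x < f y) -> 0 <= t0 <= L -> 0 < e ->
  exists2 eta, 0 < eta & forall g a b t, `|a| < eta -> `|b - L| < eta ->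
    (forall x y, a <= x -> x <= y -> y <= b -> g x <= g y) ->
    (forall s, `|g s - f s| < eta) -> a <= t <= b -> `|g t - f t0| < eta -> `|t - t0| < e.
Proof.
move=> f_lt t0_in e0.
have [eta1 eta1_gt0 lower] := increasing_inverse_lower f_lt t0_in e0.
have fN_lt x y : 0 <= x -> x < y -> y <= L -> - f (L - x) < - f (L - y).
  by move=> *; rewrite ltrN2; apply: f_lt; lra.
have [eta2 eta2_gt0 upper] :=
  increasing_inverse_lower (f := fun x => - f (L - x)) (t0 := L - t0) fN_lt
    ltac:(by move: t0_in => /andP[? ?]; apply/andP; split; lra) e0.
exists (Num.min eta1 eta2) => [|g a b t]; first by rewrite lt_min eta1_gt0.
rewrite !lt_min => /andP[a1 a2] /andP[b1 b2] g_le gf /andP[a_le t_le_b] /andP[gt1 gt2].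
have gf1 s : `|g s - f s| < eta1 by have := gf s; rewrite lt_min => /andP[].
have gf2 s : `|- g (L - s) - - f (L - s)| < eta2.
  by rewrite -opprD normrN; have := gf (L - s); rewrite lt_min => /andP[].
have lo := lower g a b t a1 b1 g_le gf1 ltac:(by apply/andP) gt1.
have up : L - t0 - e < L - t.
  apply: (upper (fun x => - g (L - x)) (L - b) (L - a) (L - t)).
  - by rewrite distrC.
  - by rewrite addrAC subrr add0r normrN.
  - by move=> x y *; rewrite lerN2; apply: g_le; lra.
  - exact: gf2.
  - by apply/andP; split; lra.
  - by rewrite !subKr -opprD normrN.
by rewrite ltr_norml; apply/andP; split; lra.
Qed.

End RealFunctions.

Lemma homeomorphic_S1_eq (R : realType) (V : set R) :
  V `<=` @S1 R -> homeomorphic_S1 V -> V = @S1 R.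
Proof.
move=> VS [phi [psi [_ [psiV [_ [phipsi [_ psi_cont]]]]]]].
apply/seteqP; split => // p Sp; apply: contrapT => nVp.
pose h y := dccw p (psi (frac01 y)).
have h_gt0 y : 0 < h y.
  rewrite lt_neqAle frac01_ge0 andbT; apply/eqP => h0; apply: nVp.
  rewrite -(cshift0 Sp) h0 cshift_dccw; last exact/VS/psiV/S1_frac01.
  exact/psiV/S1_frac01.
have h_cont : continuous h.
  apply: continuous_of_eps_delta => y0 e e0.
  have m_gt0 : 0 < Num.min e (Num.min (h y0) (1 - h y0)).
    by rewrite !lt_min e0 h_gt0 subr_gt0 frac01_lt1.
  have [d d0 Hd] := psi_cont _ (S1_frac01 y0) _ m_gt0.
  exists d => // y y0y.
  have := Hd _ (S1_frac01 y); rewrite dcirc_frac01.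
  move=> /(_ (le_lt_trans (dcirc_le_norm _ _) y0y)).
  rewrite -(dcirc_subr _ _ p) !lt_min => /andP[close_e close_h].
  by rewrite /h /dccw frac01_dist // lt_min.
have h01 : h 0 = h 1 by rewrite /h -[1 in RHS]add0r (frac01_addz 0 1).
have [c1 [c2 [c1_ge0 c12 c2_lt1 hc]]] := continuous_periodic_not_injective h_cont h01.
have [S1c1 S1c2] : S1 c1 /\ S1 c2 by rewrite /S1 /=; split; apply/andP; split; lra.
have psi_c : psi c1 = psi c2.
  move: hc; rewrite /h !frac01_id // => /(congr1 (cshift p)).
  by rewrite !cshift_dccw //; apply/VS/psiV.
by move: c12; rewrite -(phipsi _ S1c1) -(phipsi _ S1c2) psi_c ltxx.
Qed.

Section CyclicGraphOnCircle.
Variables (R : realType) (E : R -> R -> Prop) (dV : R -> R -> R).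
Hypotheses (cgE : cyclic_graph (@S1 R) E) (mdV : metric_for (@S1 R) E dV).
Implicit Types (a b r s t u w x : R).
Local Notation gamma1 := (gamma_m E 1).

Lemma path_lengths1_edge x s : path_lengths E 1 x s -> exists2 v, E x v & s = dccw x v.
Proof.
case=> u [u0 [uE ->]]; exists (u 1%N); last by rewrite big_ord1 u0.
by have := uE 0%N isT; rewrite u0.
Qed.

Lemma path_lengths1_ub x : has_ubound (path_lengths E 1 x).
Proof. by exists 1 => _ /path_lengths1_edge[v _ ->]; exact/ltW/frac01_lt1. Qed.

Lemma gamma1_ge0 x : 0 <= gamma1 x.
Proof.
rewrite /gamma_m; have [->|/set0P[s xs]] := eqVneq (path_lengths E 1 x) set0.
  by rewrite sup0.
apply: le_trans (ub_le_sup (path_lengths1_ub x) xs).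
by have [v _ ->] := path_lengths1_edge xs; exact: frac01_ge0.
Qed.

Lemma gamma1_le1 x : gamma1 x <= 1.
Proof.
rewrite /gamma_m; have [->|/set0P ne] := eqVneq (path_lengths E 1 x) set0.
  by rewrite sup0 ler01.
apply: ge_sup => // _ /path_lengths1_edge[v _ ->]; exact/ltW/frac01_lt1.
Qed.

Lemma gamma1_edge x w : S1 w -> 0 < dccw x w < gamma1 x -> E x w.
Proof.
move=> Sw /andP[w_gt0 w_lt].
have [empty|/set0P ne] := eqVneq (path_lengths E 1 x) set0.
  by move: w_lt; rewrite /gamma_m empty sup0; lra.
have [_ /path_lengths1_edge[v xv ->] w_lt'] := sup_gt ne w_lt.
by have [] := cg_cyclic cgE xv Sw (introT andP (conj w_gt0 w_lt')).
Qed.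

Lemma dV_xx x : S1 x -> dV x x = 0.
Proof. by move=> Sx; apply/(mV_eq0 mdV Sx Sx). Qed.

Lemma dV_lipschitzr x a b : S1 x -> S1 a -> S1 b -> `|dV x a - dV x b| <= dV a b.
Proof.
move=> Sx Sa Sb; have := mV_tri mdV Sx Sa Sb; have := mV_tri mdV Sx Sb Sa.
by rewrite (mV_sym mdV Sb Sa) ler_norml => ? ?; apply/andP; split; lra.
Qed.

Lemma dV_lipschitzl x a b : S1 x -> S1 a -> S1 b -> `|dV a x - dV b x| <= dV a b.
Proof.
by move=> Sx Sa Sb; rewrite (mV_sym mdV Sa) // (mV_sym mdV Sb) // dV_lipschitzr.
Qed.

Definition dV_along x s := dV x (cshift x s).

Lemma dV_along_continuous x : S1 x -> continuous (dV_along x).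
Proof.
move=> Sx; apply: continuous_of_eps_delta => s e e0.
have [d d0 Hd] := mV_top1 mdV (S1_cshift x s) e0.
exists d => // t st.
apply: le_lt_trans (dV_lipschitzr Sx (S1_cshift _ _) (S1_cshift _ _)) _.
exact: Hd (S1_cshift _ _) (le_lt_trans (dcirc_cshift _ _ _) st).
Qed.

(* Inside the arc the monotonicity comes from the cyclic structure and the metric
   condition on paths; continuity extends it to the endpoints. *)
Lemma dV_along_lt x : S1 x -> gamma1 x < 1 ->
  forall a b, 0 <= a -> a < b -> b <= gamma1 x -> dV_along x a < dV_along x b.
Proof.
move=> Sx g1; apply: continuous_homo_lt_closed (dV_along_continuous Sx) _.
move=> a b a_gt0 ab b_lt.
have [Sa Sb] : S1 a /\ S1 b by rewrite /S1 /=; split; apply/andP; split; lra.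
have xb : E x (cshift x b).
  by apply: gamma1_edge (S1_cshift _ _) _; rewrite dccw_cshift //; apply/andP; split; lra.
have [xa ab'] : E x (cshift x a) /\ E (cshift x a) (cshift x b).
  apply: (cg_cyclic cgE xb (S1_cshift x a)).
  by rewrite !dccw_cshift //; apply/andP; split; lra.
rewrite /dV_along; exact: (mV_path mdV xa ab').
Qed.

Lemma dV_along_le x : S1 x -> gamma1 x < 1 ->
  forall a b, 0 <= a -> a <= b -> b <= gamma1 x -> dV_along x a <= dV_along x b.
Proof.
move=> Sx g1 a b a_ge0; rewrite le_eqVlt => /orP[/eqP-> //|ab] b_le.
exact/ltW/dV_along_lt.
Qed.

Lemma g_rP x r w : arcV (@S1 R) x (f1 E x) w -> dV x w = r ->
  arcV (@S1 R) x (f1 E x) (g_r (@S1 R) E dV r x) /\ dV x (g_r (@S1 R) E dV r x) = r.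
Proof.
move=> xw wr.
suff : [set w | arcV (@S1 R) x (f1 E x) w /\ dV x w = r] (g_r (@S1 R) E dV r x) by [].
by apply: xgetPex; exists w.
Qed.

Lemma g_r_cshift x r : S1 x -> gamma1 x < 1 -> 0 <= r <= gamma_V E dV x ->
  exists2 t, 0 <= t <= gamma1 x & g_r (@S1 R) E dV r x = cshift x t /\ dV_along x t = r.
Proof.
move=> Sx g1 /andP[r_ge0 r_le].
have Sg1 : S1 (gamma1 x) by rewrite /S1 /= gamma1_ge0.
have dccw_f1 : dccw x (f1 E x) = gamma1 x by exact: dccw_cshift.
have [c /andP[c_ge0 c_le] xc] : exists2 c, 0 <= c <= gamma1 x & dV_along x c = r.
  apply: ivt_continuous (gamma1_ge0 x) (dV_along_continuous Sx) _.
  rewrite /dV_along cshift0 // dV_xx // ge_min r_ge0 le_max.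
  by apply/orP; right.
have Sc : S1 c by rewrite /S1 /=; apply/andP; split; lra.
have arc_c : arcV (@S1 R) x (f1 E x) (cshift x c).
  by split; [exact: S1_cshift | rewrite dccw_f1 dccw_cshift].
have [[Sg g_le] gr] := g_rP arc_c xc.
exists (dccw x (g_r (@S1 R) E dV r x)); first by rewrite frac01_ge0 -dccw_f1.
by rewrite /dV_along cshift_dccw.
Qed.

Lemma g_r0 x : S1 x -> g_r (@S1 R) E dV 0 x = x.
Proof.
move=> Sx; have arc_x : arcV (@S1 R) x (f1 E x) x.
  by split => //; rewrite /dccw subrr frac01_id ?frac01_ge0 // /S1 /= lexx ltr01.
have [[Sg _] /(mV_eq0 mdV Sx Sg) gx] := g_rP arc_x (dV_xx Sx).
by rewrite -gx.
Qed.

Lemma gamma_inf_le x : S1 x -> gamma_inf (@S1 R) E dV <= gamma_V E dV x.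
Proof.
move=> Sx; apply: ge_inf; last by exists x.
by exists 0 => _ [y Sy <-]; apply: (mV_ge0 mdV Sy (S1_cshift _ _)).
Qed.

Lemma gamma1_lt1 x : S1 x -> 0 < gamma_inf (@S1 R) E dV -> gamma1 x < 1.
Proof.
move=> Sx gamma_pos; rewrite lt_neqAle gamma1_le1 andbT; apply/eqP => g1.
have f1x : f1 E x = x by rewrite /f1 g1 (frac01_addz x 1) frac01_id.
by have := gamma_inf_le Sx; rewrite /gamma_V f1x dV_xx //; lra.
Qed.

Section PositiveGamma.
Hypotheses (gamma1_cont : cont_on_V (@S1 R) gamma1)
  (gamma_pos : 0 < gamma_inf (@S1 R) E dV).

Lemma g_r_continuous u r : S1 u -> 0 <= r <= gamma_inf (@S1 R) E dV ->
  forall e, 0 < e -> exists2 d, 0 < d &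
    forall u' r', S1 u' -> 0 <= r' <= gamma_inf (@S1 R) E dV ->
      dcirc u u' < d -> `|r - r'| < d ->
      dcirc (g_r (@S1 R) E dV r u) (g_r (@S1 R) E dV r' u') < e.
Proof.
have r_le x r0 : S1 x -> 0 <= r0 <= gamma_inf (@S1 R) E dV -> 0 <= r0 <= gamma_V E dV x.
  by move=> Sx /andP[-> r0_le]; apply: le_trans r0_le (gamma_inf_le Sx).
move=> Su r_in e e0; have g1u := gamma1_lt1 Su gamma_pos.
have [t0 t0_in [gu ut0]] := g_r_cshift Su g1u (r_le _ _ Su r_in).
have [eta eta0 stable] := increasing_inverse_stable (dV_along_lt Su g1u) t0_in e0.
have [d1 d1_gt0 Hd1] := gamma1_cont Su (e := eta / 2) ltac:(lra).
have [d2 d2_gt0 Hd2] := mV_top1 mdV Su eta0.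
exists (Num.min (eta / 2) (Num.min d1 d2)) => [|u' r' Su' r'_in].
  by rewrite !lt_min d1_gt0 d2_gt0 andbT; lra.
rewrite !lt_min => /andP[uu'_eta /andP[uu'_d1 uu'_d2]] /andP[rr' _].
have g1u' := gamma1_lt1 Su' gamma_pos.
have [t t_in [gu' u't]] := g_r_cshift Su' g1u' (r_le _ _ Su' r'_in).
have [ofs o_dist] := dcirc_offset u' u; rewrite frac01_id // -/(cshift u' ofs) => u_o.
have shift s : cshift u s = cshift u' (ofs + s) by rewrite u_o cshiftD.
have o_lt : `|ofs| < eta / 2 by rewrite o_dist dcirc_sym.
rewrite gu gu' (_ : t = ofs + (t - ofs)); last by ring.
rewrite -shift; apply: le_lt_trans (dcirc_cshift _ _ _) _; rewrite distrC.
(* Seen from u', the points u + s form a reparametrization of the arc of u' shifted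
   by ofs, at distances from u' within dV u u' of their distances from u. *)
apply: (stable (fun s => dV u' (cshift u s)) (- ofs) (gamma1 u' - ofs)).
- by rewrite normrN; lra.
- have := Hd1 _ Su' uu'_d1; move: o_lt; rewrite !ltr_norml => /andP[? ?] /andP[? ?].
  by apply/andP; split; lra.
- move=> x y ox xy yb; rewrite !shift.
  by apply: dV_along_le => //; lra.
- move=> s; apply: le_lt_trans (dV_lipschitzl _ Su' Su) _; first exact: S1_cshift.
  by rewrite (mV_sym mdV Su' Su); apply: Hd2.
- by move: t_in => /andP[? ?]; apply/andP; split; lra.
- by rewrite shift subrKC -/(dV_along u' t) u't ut0 distrC; lra.
Qed.

End PositiveGamma.

End CyclicGraphOnCircle.

Theorem lemma4p7 (R : realType) (V : set R) (E : R -> R -> Prop) (dV : R -> R -> R) :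
  cyclic_graph V E -> closed_V V -> continuous_graph V E -> metric_for V E dV ->
  homeomorphic_S1 V ->
  forall u r, V u -> 0 <= r <= gamma_inf V E dV ->
  forall e, 0 < e -> exists2 d, 0 < d &
    forall u' r', V u' -> 0 <= r' <= gamma_inf V E dV ->
      dcirc u u' < d -> `|r - r'| < d ->
      dcirc (g_r V E dV r u) (g_r V E dV r' u') < e.
Proof.
move=> cgE _ E_cont mdV V_homeo.
have V_S1 := homeomorphic_S1_eq (cg_sub cgE) V_homeo; subst V.
move=> u r Su r_in e e0.
have [gamma_pos|gamma_le0] := ltrP 0 (gamma_inf (@S1 R) E dV).
  exact (g_r_continuous cgE mdV (E_cont 1%N) gamma_pos Su r_in e0).
exists e => // u' r' Su' r'_in uu' _.
have [-> ->] : r = 0 /\ r' = 0 by move: r_in r'_in => /andP[? ?] /andP[? ?]; split; lra.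
by rewrite !g_r0.
Qed.
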